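(* Let $k_1,k_2,k_3\ge1$, let $G$ be the grid graph on $\{0,\dots,k_1\}\times\{0,\dots,k_2\}\times\{0,\dots,k_3\}$ (adjacency: differing by $1$ in exactly one coordinate), let $\mathcal B=\{B_1,\dots,B_m\}$ with $B_i=[a_i',a_i'']\times[b_i',b_i'']\times[c_i',c_i'']\subseteq\mathbb R^3$ boxes with integer endpoints $0\le a_i'<a_i''\le k_1$, $0\le b_i'<b_i''\le k_2$, $0\le c_i'<c_i''\le k_3$, and let $G_i$ be the subgraph of $G$ induced by the vertices in $B_i$. Let $\widetilde G$ be the graph with vertex set $V(G)\cup\{(u,i):1\le i\le m,\ u\in V(G_i)\}$ and edges: all edges of $G$; the edges $(u,i)(w,i)$ for $uw$ an edge of $G_i$; and the edges $u\,(u,i)$ for $u\in V(G_i)$. Let $\alpha=(0,0,0)$. Then $\chi(\Gamma(\widetilde G))\ge\chi(\Gamma_\alpha(\widetilde G))\ge\chi(\mathcal B)$.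
   Context: $\widetilde G$ is a median graph; $d$ is its graph distance. The Djoković–Winkler relation $\Theta$: $xy\,\Theta\,zw$ iff $d(x,z)+d(y,w)\ne d(x,w)+d(y,z)$, an equivalence relation on edges of a median graph. Two $\Theta$-classes cross if some 4-cycle has two opposite edges in one class and the other two in the other; they osculate if some edges $e$, $e'$, one from each class, share an endpoint and lie in no common 4-cycle. The contact graph $\Gamma(\widetilde G)$ has the $\Theta$-classes as vertices, distinct classes adjacent iff they cross or osculate. With edges directed from $x$ to $y$ iff $d(x,\alpha)<d(y,\alpha)$ (tail = origin), the pointed contact graph $\Gamma_\alpha(\widetilde G)$ has the same vertices, distinct classes adjacent iff they cross or osculate via two edges with a common origin. $\chi$ denotes chromatic number; $\chi(\mathcal B)$ is the chromatic number of the intersection graph of the boxes of $\mathcal B$ (boxes adjacent iff they intersect as subsets of $\mathbb R^3$). *)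

From Stdlib Require Import Reals ClassicalEpsilon.
From mathcomp Require Import all_boot all_order.
Set Implicit Arguments. Unset Strict Implicit. Unset Printing Implicit Defensive.

Section Generic.
Variable T : finType.
Variable adj : rel T.

Fixpoint reach (n : nat) (x y : T) : bool :=
  if n is n'.+1 then reach n' x y || [exists z, adj x z && reach n' z y]
  else x == y.

(* graph distance: least n with a walk of length <= n (walks of length
   >= #|T| are never needed; value #|T|.+1 only for disconnected pairs) *)
Definition dist (x y : T) : nat := find (fun n => reach n x y) (iota 0 #|T|.+1).

(* (ordered) edges; each undirected edge appears in both orientations *)
Definition edges : {set T * T} := [set p | adj p.1 p.2].

Definition theta (e f : T * T) : bool :=
  dist e.1 f.1 + dist e.2 f.2 != dist e.1 f.2 + dist e.2 f.1.

Definition theta_class (e : T * T) : {set T * T} := [set f in edges | theta e f].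

Definition theta_classes : {set {set T * T}} := theta_class @: edges.

Definition cycle4 (v0 v1 v2 v3 : T) : bool :=
  [&& uniq [:: v0; v1; v2; v3], adj v0 v1, adj v1 v2, adj v2 v3 & adj v3 v0].

Definition same_edge (e : T * T) (a b : T) : bool :=
  ((e.1 == a) && (e.2 == b)) || ((e.1 == b) && (e.2 == a)).

Definition edge_on_cycle4 (e : T * T) (v0 v1 v2 v3 : T) : bool :=
  [|| same_edge e v0 v1, same_edge e v1 v2, same_edge e v2 v3 | same_edge e v3 v0].

Definition common_cycle4 (e f : T * T) : bool :=
  [exists v0, exists v1, exists v2, exists v3,
     [&& cycle4 v0 v1 v2 v3, edge_on_cycle4 e v0 v1 v2 v3
       & edge_on_cycle4 f v0 v1 v2 v3]].

Definition cross (C1 C2 : {set T * T}) : bool :=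
  [exists v0, exists v1, exists v2, exists v3,
     [&& cycle4 v0 v1 v2 v3, (v0, v1) \in C1, (v2, v3) \in C1,
         (v1, v2) \in C2 & (v3, v0) \in C2]].

Definition osculate (C1 C2 : {set T * T}) : bool :=
  [exists x, exists y, exists z,
     [&& (x, y) \in C1, (x, z) \in C2 & ~~ common_cycle4 (x, y) (x, z)]].

(* same, but the two edges have a common origin x w.r.t. the base point alpha:
   x y is directed from x to y iff d(x,alpha) < d(y,alpha) *)
Definition osculate_at (alpha : T) (C1 C2 : {set T * T}) : bool :=
  [exists x, exists y, exists z,
     [&& (x, y) \in C1, (x, z) \in C2, ~~ common_cycle4 (x, y) (x, z),
         dist x alpha < dist y alpha & dist x alpha < dist z alpha]].

Definition contact_adj : rel {set T * T} :=
  fun C1 C2 => cross C1 C2 || osculate C1 C2.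

Definition pcontact_adj (alpha : T) : rel {set T * T} :=
  fun C1 C2 => cross C1 C2 || osculate_at alpha C1 C2.

End Generic.

Definition colorable (U : finType) (V : {set U}) (adj : rel U) (k : nat) : bool :=
  [exists f : {ffun U -> 'I_(#|U|.+1)},
     [forall x in V, f x < k] &&
     [forall x in V, forall y in V, (x != y) && adj x y ==> (f x != f y)]].

Lemma colorable_ex (U : finType) (V : {set U}) (adj : rel U) :
  exists k, colorable V adj k.
Proof.
exists #|U|.+1; apply/existsP; exists [ffun x => inord (enum_rank x)].
apply/andP; split.
  by apply/forallP => x; apply/implyP => _; exact: ltn_ord.
apply/forallP => x; apply/implyP => _; apply/forallP => y; apply/implyP => _.
apply/implyP => /andP[xy _]; rewrite !ffunE.
apply: contra xy => /eqP /(congr1 val) /=.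
rewrite !inordK; try exact: leqW (ltn_ord _).
by move/val_inj/enum_rank_inj => ->.
Qed.

Definition chi (U : finType) (V : {set U}) (adj : rel U) : nat :=
  ex_minn (colorable_ex V adj).

Definition gpoint (k1 k2 k3 : nat) : finType :=
  ('I_k1.+1 * 'I_k2.+1 * 'I_k3.+1)%type.

Definition diff1 (a b : nat) : bool := (a == b.+1) || (b == a.+1).

Definition grid_adj (k1 k2 k3 : nat) : rel (gpoint k1 k2 k3) :=
  fun u w =>
    [|| diff1 u.1.1 w.1.1 && (u.1.2 == w.1.2) && (u.2 == w.2),
        (u.1.1 == w.1.1) && diff1 u.1.2 w.1.2 && (u.2 == w.2) |
        (u.1.1 == w.1.1) && (u.1.2 == w.1.2) && diff1 u.2 w.2].

Definition in_box (k1 k2 k3 m : nat) (a1 a2 b1 b2 c1 c2 : 'I_m -> nat)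
  (i : 'I_m) (u : gpoint k1 k2 k3) : bool :=
  [&& a1 i <= u.1.1 <= a2 i, b1 i <= u.1.2 <= b2 i & c1 i <= u.2 <= c2 i].

(* vertices of G~ : (None, u) is u in V(G); (Some i, u) is (u,i), u in V(G_i).
   Pairs (Some i, u) with u outside B_i are not vertices (isolated, invalid). *)
Definition tvert (k1 k2 k3 m : nat) : finType :=
  (option 'I_m * gpoint k1 k2 k3)%type.

Definition tvalid (k1 k2 k3 m : nat) (a1 a2 b1 b2 c1 c2 : 'I_m -> nat)
  (v : tvert k1 k2 k3 m) : bool :=
  if v.1 is Some i then in_box a1 a2 b1 b2 c1 c2 i v.2 else true.

Definition tadj (k1 k2 k3 m : nat) (a1 a2 b1 b2 c1 c2 : 'I_m -> nat)
  : rel (tvert k1 k2 k3 m) :=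
  fun v w =>
    [&& tvalid a1 a2 b1 b2 c1 c2 v, tvalid a1 a2 b1 b2 c1 c2 w &
      ((v.1 == w.1) && grid_adj v.2 w.2)
      || ((v.2 == w.2) && (((v.1 == None) && (w.1 != None))
                           || ((v.1 != None) && (w.1 == None))))].

Definition talpha (k1 k2 k3 m : nat) : tvert k1 k2 k3 m := (None, (ord0, ord0, ord0)).

Definition boxes_meet (m : nat) (a1 a2 b1 b2 c1 c2 : 'I_m -> nat) (i j : 'I_m) : Prop :=
  exists x y z : R,
    (Rle (INR (a1 i)) x /\ Rle x (INR (a2 i))) /\ (Rle (INR (a1 j)) x /\ Rle x (INR (a2 j))) /\
    (Rle (INR (b1 i)) y /\ Rle y (INR (b2 i))) /\ (Rle (INR (b1 j)) y /\ Rle y (INR (b2 j))) /\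
    (Rle (INR (c1 i)) z /\ Rle z (INR (c2 i))) /\ (Rle (INR (c1 j)) z /\ Rle z (INR (c2 j))).

Definition box_adj (m : nat) (a1 a2 b1 b2 c1 c2 : 'I_m -> nat) : rel 'I_m :=
  fun i j => if excluded_middle_informative (boxes_meet a1 a2 b1 b2 c1 c2 i j)
             then true else false.

From Stdlib Require Import Rbase ClassicalEpsilon.
From mathcomp Require Import all_boot all_order zify.
Set Implicit Arguments. Unset Strict Implicit. Unset Printing Implicit Defensive.

(* The first inequality holds because the pointed contact graph is a subgraph
   of the contact graph.  For the second, send the box B_i to the Theta-class
   C_i of the edge joining its lowest corner p_i to (p_i, i).  Between u <= v
   (coordinatewise), the distance in G~ is the l1-distance of the grid points
   plus the number of moves between the base layer and the box layers that are
   needed: monotone grid walks give the upper bound, and the sum of the two is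
   1-Lipschitz along edges.  Hence for u in B_i the edge u (u,i) lies in C_i
   while, for j <> i, the edge u (u,j) does not.  If u lies in B_i and B_j,
   the classes C_i and C_j are therefore distinct and osculate at u: the edges
   u (u,i) and u (u,j) lie in no common 4-cycle, since u is the only neighbour
   of (u,i) outside layer i, and both point away from alpha.  So a colouring of
   the pointed contact graph pulls back along i |-> C_i to a colouring of the
   intersection graph of the boxes. *)

Section Walks.
Variables (T : finType) (adj : rel T).

Lemma reachS n x y : reach adj n x y -> reach adj n.+1 x y.
Proof. by move=> h /=; rewrite h. Qed.

Lemma reach_cons n x z y : adj x z -> reach adj n z y -> reach adj n.+1 x y.
Proof. by move=> xz zy /=; apply/orP; right; apply/existsP; exists z; rewrite xz. Qed.

Lemma reach1 x y : adj x y -> reach adj 1 x y.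
Proof. by move=> xy; apply: (reach_cons xy) => /=. Qed.

Lemma reach_cat m n x y z :
  reach adj m x y -> reach adj n y z -> reach adj (m + n) x z.
Proof.
elim: m x => [|m IH] x /=; first by move/eqP->.
case/orP=> [xy yz | /existsP[w /andP[xw wy]] yz].
  exact/reachS/(IH _ xy).
exact: reach_cons xw (IH _ wy yz).
Qed.

Lemma reach_lipschitz (phi : T -> nat) :
  (forall x y, adj x y -> phi y <= phi x + 1) ->
  forall n x y, reach adj n x y -> phi y <= phi x + n.
Proof.
move=> phi_lip; elim=> [|n IH] x y /=; first by move/eqP->; rewrite addn0.
case/orP=> [/IH | /existsP[w /andP[/phi_lip xw /IH wy]]]; lia.
Qed.

Lemma dist_eq n x y :
  reach adj n x y -> n <= #|T| -> (forall k, reach adj k x y -> n <= k) ->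
  dist adj x y = n.
Proof.
move=> xy n_le n_min; rewrite /dist.
set s := iota 0 #|T|.+1; set P := fun k => reach adj k x y.
have nth_s k : k < #|T|.+1 -> nth 0 s k = k by move=> ?; rewrite nth_iota.
have has_s : has P s by apply/hasP; exists n; rewrite ?mem_iota.
have find_lt : find P s < #|T|.+1 by move: has_s; rewrite has_find size_iota.
apply/eqP; rewrite eqn_leq; apply/andP; split.
  rewrite leqNgt; apply/negP => /(before_find 0).
  by rewrite nth_s ?ltnS // /P xy.
by apply: n_min; have := nth_find 0 has_s; rewrite nth_s.
Qed.

End Walks.

Section SymmetricWalks.
Variables (T : finType) (adj : rel T).
Hypothesis adj_sym : symmetric adj.

Lemma reach_sym n x y : reach adj n x y -> reach adj n y x.
Proof.
elim: n x y => [|n IH] x y; first by rewrite /= eq_sym.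
case/orP=> [/IH/reachS // | /existsP[w /andP[xw /IH yw]]].
by rewrite -addn1; apply: reach_cat yw (reach1 _); rewrite adj_sym.
Qed.

Lemma dist_sym x y : dist adj x y = dist adj y x.
Proof. by apply: eq_find => n; apply/idP/idP; apply: reach_sym. Qed.

End SymmetricWalks.

Lemma common_cycle4_apex (T : finType) (adj : rel T) (x y z : T) : y != z ->
  common_cycle4 adj (x, y) (x, z) ->
  exists w, [&& w != x, adj y w || adj w y & adj z w || adj w z].
Proof.
move=> yz /existsP[v0 /existsP[v1 /existsP[v2 /existsP[v3 /and3P[c e1 e2]]]]].
case/and5P: c => U h01 h12 h23 h30.
(* Both edges sit on the cycle and share x, so the apex is the vertex of the
   cycle opposite x; enumerate the positions of the two edges. *)
move: e1 e2; rewrite /edge_on_cycle4 /same_edge /=.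
case/or4P=> /orP[]/andP[]/eqP E1 /eqP E2; case/or4P=> /orP[]/andP[]/eqP E3 /eqP E4;
  subst;
  try (by move: U; rewrite /= !inE ?eqxx ?orbT ?andbF);
  try (by rewrite eqxx in yz);
  match goal with v : _ |- _ =>
    solve [exists v; rewrite ?h01 ?h12 ?h23 ?h30 ?orbT ?andbT /=;
           apply/eqP => E; rewrite E in U; move: U; rewrite /= !inE ?eqxx /= ?orbT /= ?andbF //] end.
Qed.

Lemma chi_le (U : finType) (V : {set U}) (adj : rel U) k :
  colorable V adj k -> chi V adj <= k.
Proof. by rewrite /chi; case: ex_minnP => n _; apply. Qed.

Lemma chi_colorable (U : finType) (V : {set U}) (adj : rel U) :
  colorable V adj (chi V adj).
Proof. by rewrite /chi; case: ex_minnP. Qed.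

Lemma colorable_large (U : finType) (V : {set U}) (adj : rel U) k :
  #|U| < k -> colorable V adj k.
Proof.
move=> Uk; have [k0 /existsP[f /andP[_ f_proper]]] := colorable_ex V adj.
apply/existsP; exists f; rewrite f_proper andbT.
by apply/forallP => x; apply/implyP => _; apply: leq_trans Uk.
Qed.

Section ColorableHom.
Variables (U U' : finType) (V : {set U}) (V' : {set U'}).
Variables (adj : rel U) (adj' : rel U') (phi : U' -> U).
Hypothesis phiV : {in V', forall x, phi x \in V}.
Hypothesis phi_adj : {in V' &, forall x y, x != y -> adj' x y ->
  (phi x != phi y) && adj (phi x) (phi y)}.

Lemma colorable_hom k : colorable V adj k -> colorable V' adj' k.
Proof.
case: (ltnP #|U'| k) => [|kU' /existsP[f /andP[/forallP f_lt /forallP f_proper]]].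
  by move=> U'k _; apply: colorable_large.
have fphi_lt x : x \in V' -> f (phi x) < k by move/phiV; apply/implyP/f_lt.
have fphi_ord x : x \in V' -> f (phi x) < #|U'|.+1.
  by move=> /fphi_lt lt_k; apply: leq_trans lt_k (leqW kU').
apply/existsP; exists [ffun x => inord (f (phi x))]; apply/andP; split.
  by apply/forallP => x; apply/implyP => xV'; rewrite ffunE inordK ?fphi_ord ?fphi_lt.
apply/forallP => x; apply/implyP => xV'; apply/forallP => y; apply/implyP => yV'.
apply/implyP => /andP[xy /(phi_adj xV' yV' xy) /andP[phixy adjxy]].
have := f_proper (phi x); rewrite phiV // => /forallP /(_ (phi y)).
rewrite phiV // phixy adjxy /= !ffunE; apply: contra => /eqP/(congr1 val).
by rewrite /= !inordK ?fphi_ord // => /val_inj ->.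
Qed.

Lemma chi_hom : chi V' adj' <= chi V adj.
Proof. exact/chi_le/colorable_hom/chi_colorable. Qed.

End ColorableHom.

Lemma pcontact_adj_sub (T : finType) (adj : rel T) (alpha : T) C1 C2 :
  pcontact_adj adj alpha C1 C2 -> contact_adj adj C1 C2.
Proof.
case/orP=> [cr | /existsP[x /existsP[y /existsP[z /and5P[xy xz no_c4 _ _]]]]].
  by rewrite /contact_adj cr.
by apply/orP; right; apply/existsP; exists x; apply/existsP; exists y;
   apply/existsP; exists z; rewrite xy xz no_c4.
Qed.

Section Grid.
Variables k1 k2 k3 : nat.
Local Notation P := (gpoint k1 k2 k3).

Definition grid_dist (p u : P) : nat :=
  (p.1.1 - u.1.1) + (u.1.1 - p.1.1) + ((p.1.2 - u.1.2) + (u.1.2 - p.1.2))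
  + ((p.2 - u.2) + (u.2 - p.2)).

Definition grid_le (p u : P) : bool :=
  [&& p.1.1 <= u.1.1, p.1.2 <= u.1.2 & p.2 <= u.2].

Lemma grid_le_trans : transitive grid_le.
Proof. by move=> p x u /and3P[? ? ?] /and3P[? ? ?]; apply/and3P; split; lia. Qed.

Lemma grid_dist_le (p u : P) : grid_dist p u <= k1 + k2 + k3.
Proof.
case: p u => [[p1 p2] p3] [[u1 u2] u3]; rewrite /grid_dist /=.
have := ltn_ord p1; have := ltn_ord p2; have := ltn_ord p3.
have := ltn_ord u1; have := ltn_ord u2; have := ltn_ord u3; lia.
Qed.

Lemma grid_adj_sym : symmetric (@grid_adj k1 k2 k3).
Proof.
have diff1C a b : diff1 a b = diff1 b a by rewrite /diff1 orbC.
move=> [[u1 u2] u3] [[w1 w2] w3]; rewrite /grid_adj /=.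
by rewrite (diff1C u1) (diff1C u2) (diff1C u3) (eq_sym u1) (eq_sym u2) (eq_sym u3).
Qed.

Lemma grid_dist_adj p u w : grid_adj u w -> grid_dist p w <= grid_dist p u + 1.
Proof.
case: u w => [[u1 u2] u3] [[w1 w2] w3]; rewrite /grid_adj /diff1 /grid_dist /=.
case/or3P=> /andP[/andP[h1 h2] h3].
- move/eqP: h2 => <-; move/eqP: h3 => <-; case/orP: h1 => /eqP; lia.
- move/eqP: h1 => <-; move/eqP: h3 => <-; case/orP: h2 => /eqP; lia.
- move/eqP: h1 => <-; move/eqP: h2 => <-; case/orP: h3 => /eqP; lia.
Qed.

Lemma grid_step (p u : P) : grid_le p u -> p != u ->
  exists2 x, grid_adj p x &
    [&& grid_le p x, grid_le x u & (grid_dist x u).+1 == grid_dist p u].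
Proof.
case: p u => [[p1 p2] p3] [[u1 u2] u3] /and3P[/= le1 le2 le3] ne.
have [lt1 | ge1] := ltnP p1 u1.
  have s1 : p1.+1 < k1.+1 by have := ltn_ord u1; lia.
  exists ((Ordinal s1, p2), p3); last by rewrite /grid_le /grid_dist /=; lia.
  by rewrite /grid_adj /diff1 /= !eqxx /= ?orbT.
have [lt2 | ge2] := ltnP p2 u2.
  have s2 : p2.+1 < k2.+1 by have := ltn_ord u2; lia.
  exists ((p1, Ordinal s2), p3); last by rewrite /grid_le /grid_dist /=; lia.
  by rewrite /grid_adj /diff1 /= !eqxx /= ?orbT.
have [lt3 | ge3] := ltnP p3 u3.
  have s3 : p3.+1 < k3.+1 by have := ltn_ord u3; lia.
  exists ((p1, p2), Ordinal s3); last by rewrite /grid_le /grid_dist /=; lia.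
  by rewrite /grid_adj /diff1 /= !eqxx /= ?orbT.
by case/negP: ne; apply/eqP; congr ((_, _), _); apply: ord_inj; lia.
Qed.

Lemma grid_walk (T : finType) (R : rel T) (e : P -> T) (p u : P) :
  (forall x w, grid_le p x -> grid_le x u -> grid_le p w -> grid_le w u ->
     grid_adj x w -> R (e x) (e w)) ->
  grid_le p u -> reach R (grid_dist p u) (e p) (e u).
Proof.
move=> R_grid pu.
suff walk n x : grid_dist x u = n -> grid_le p x -> grid_le x u -> reach R n (e x) (e u).
  by apply: walk => //; apply/and3P.
elim: n x => [|n IH] x dxu px xu.
  case: (eqVneq x u) => [-> | /(grid_step xu) [w _ /and3P[_ _]]]; first by rewrite /= eqxx.
  by rewrite dxu.
case: (eqVneq x u) => [xeu | /(grid_step xu) [w xw /and3P[xlew wu /eqP dwu]]].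
  by move: dxu; rewrite xeu /grid_dist !subnn.
apply: reach_cons (R_grid _ _ px xu (grid_le_trans px xlew) wu xw) (IH _ _ _ _) => //.
- by move: dwu; rewrite dxu => -[].
- exact: grid_le_trans px xlew.
Qed.

End Grid.

Section BoxGraph.
Variables (k1 k2 k3 m : nat) (a1 a2 b1 b2 c1 c2 : 'I_m -> nat).

Local Notation P := (gpoint k1 k2 k3).
Local Notation V := (tvert k1 k2 k3 m).
Local Notation A := (@tadj k1 k2 k3 m a1 a2 b1 b2 c1 c2).
Local Notation valid := (@tvalid k1 k2 k3 m a1 a2 b1 b2 c1 c2).
Local Notation in_box := (@in_box k1 k2 k3 m a1 a2 b1 b2 c1 c2).

Lemma tadj_sym : symmetric A.
Proof.
move=> [o u] [o' w]; rewrite /tadj andbCA /= grid_adj_sym (eq_sym o) (eq_sym u).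
by case: (o == None); case: (o' == None).
Qed.

Lemma tadj_base i u : in_box i u -> A (None, u) (Some i, u).
Proof. by move=> iu; rewrite /tadj /= eqxx /tvalid /= iu. Qed.

Lemma tadj_layer o x w : valid (o, x) -> valid (o, w) -> grid_adj x w -> A (o, x) (o, w).
Proof. by rewrite /tadj => -> -> /= ->; rewrite eqxx. Qed.

Lemma tadj_from_top i u w : A (Some i, u) w -> w.1 = Some i \/ w = (None, u).
Proof.
case: w => o w; rewrite /tadj /= => /and3P[_ _ /orP[/andP[/eqP <- _] | /andP[/eqP <-]]].
  by left.
by case: o => //= _; right.
Qed.

(* Number of moves between the base layer [None] and the box layers needed
   to get from layer [o] to layer [o']. *)
Definition layer_dist (o o' : option 'I_m) : nat :=
  if o == o' then 0 else (o != None) + (o' != None).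

Lemma tadj_potential_lipschitz (p : P) o v w : A v w ->
  grid_dist p w.2 + layer_dist o w.1 <= grid_dist p v.2 + layer_dist o v.1 + 1.
Proof.
case: v w => [o1 u] [o2 w]; rewrite /tadj /= => /and3P[_ _ /orP[/andP[/eqP <- uw] |]].
  by have := grid_dist_adj p uw; lia.
case/andP=> /eqP <-; rewrite /layer_dist.
by case: o o1 o2 => [i|] [s|] [s'|] //= _; do ?case: eqP; lia.
Qed.

Lemma grid_dist_layer_le_card (p u : P) o o' : grid_dist p u + layer_dist o o' <= #|V|.
Proof.
have layer_le : layer_dist o o' <= m.+1.
  rewrite /layer_dist; case: eqP => // _; case: o => [i|]; last by case: o'.
  by have := ltn_ord i; case: o' => [j|] /=; lia.
rewrite /tvert /gpoint !card_prod card_option !card_ord.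
have := grid_dist_le p u; nia.
Qed.

Lemma in_box_between i p x u :
  in_box i p -> in_box i u -> grid_le p x -> grid_le x u -> in_box i x.
Proof.
move=> /and3P[/andP[? ?] /andP[? ?] /andP[? ?]] /and3P[/andP[? ?] /andP[? ?] /andP[? ?]].
by move=> /and3P[? ? ?] /and3P[? ? ?]; apply/and3P; split; apply/andP; split; lia.
Qed.

Lemma reach_in_layer o p u : grid_le p u -> valid (o, p) -> valid (o, u) ->
  reach A (grid_dist p u) (o, p) (o, u).
Proof.
move=> pu op ou; apply: (grid_walk (e := pair o)) pu => x w px xu pw wu.
by apply: tadj_layer; case: o op ou => //= i ip iu; apply: in_box_between ip iu _ _.
Qed.

Lemma reach_down o u : valid (o, u) -> reach A (o != None) (o, u) (None, u).
Proof.
case: o => [i iu | _]; last exact: eqxx.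
by apply: reach1; rewrite tadj_sym tadj_base.
Qed.

Lemma reach_up o u : valid (o, u) -> reach A (o != None) (None, u) (o, u).
Proof. by move/reach_down/(reach_sym tadj_sym). Qed.

Lemma tvert_dist o o' p u : grid_le p u -> valid (o, p) -> valid (o', u) ->
  dist A (o, p) (o', u) = grid_dist p u + layer_dist o o'.
Proof.
move=> pu op o'u; apply: dist_eq.
- rewrite /layer_dist; case: eqP o'u => [<- | _] o'u.
    by rewrite addn0; apply: reach_in_layer.
  rewrite addnCA; apply: reach_cat (reach_down op) (reach_cat _ (reach_up o'u)).
  exact: reach_in_layer.
- exact: grid_dist_layer_le_card.
- move=> n /(reach_lipschitz (@tadj_potential_lipschitz p o)) /=.
  by rewrite /layer_dist /grid_dist !eqxx !subnn.
Qed.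

Lemma dist_to_alpha o u : valid (o, u) ->
  dist A (o, u) (talpha k1 k2 k3 m) = grid_dist (ord0, ord0, ord0) u + (o != None).
Proof.
move=> ou; rewrite dist_sym ?tvert_dist //; last exact: tadj_sym.
by rewrite /layer_dist; case: o ou.
Qed.

Hypotheses (ha : forall i, a1 i < a2 i <= k1) (hb : forall i, b1 i < b2 i <= k2)
  (hc : forall i, c1 i < c2 i <= k3).

Definition box_corner (i : 'I_m) : P := (inord (a1 i), inord (b1 i), inord (c1 i)).

Lemma box_corner_in i : in_box i (box_corner i).
Proof.
move: (ha i) (hb i) (hc i) => /andP[? ?] /andP[? ?] /andP[? ?].
rewrite /in_box /box_corner /= !inordK; lia.
Qed.

Lemma box_corner_le i u : in_box i u -> grid_le (box_corner i) u.
Proof.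
move: (ha i) (hb i) (hc i) => /andP[? ?] /andP[? ?] /andP[? ?].
rewrite /in_box /grid_le /box_corner /= !inordK; lia.
Qed.

Definition box_edge (i : 'I_m) (u : P) : V * V := ((None, u), (Some i, u)).

Definition box_class (i : 'I_m) : {set V * V} := theta_class A (box_edge i (box_corner i)).

Lemma box_edge_in_class i u : in_box i u -> box_edge i u \in box_class i.
Proof.
move=> iu; have cu := box_corner_le iu; have ci := box_corner_in i.
rewrite inE /= inE tadj_base //= /theta /= !tvert_dist //.
by rewrite /layer_dist /= !eqxx; apply/eqP; lia.
Qed.

Lemma box_edge_notin_class i j u : i != j -> in_box i u -> in_box j u ->
  box_edge j u \notin box_class i.
Proof.
move=> ij iu ju; have cu := box_corner_le iu; have ci := box_corner_in i.
have sij : (Some i == Some j) = false by apply/eqP => -[/eqP]; rewrite (negbTE ij).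
rewrite inE /= negb_and /theta /= !tvert_dist // negbK /layer_dist /= sij.
by apply/orP; right; apply/eqP; lia.
Qed.

Lemma box_class_theta i : box_class i \in theta_classes A.
Proof. by apply: imset_f; rewrite inE tadj_base ?box_corner_in. Qed.

Lemma box_classes_osculate i j u : i != j -> in_box i u -> in_box j u ->
  osculate_at A (talpha k1 k2 k3 m) (box_class i) (box_class j).
Proof.
move=> ij iu ju; apply/existsP; exists (None, u); apply/existsP; exists (Some i, u).
apply/existsP; exists (Some j, u).
rewrite !box_edge_in_class // !dist_to_alpha //= addn0 addn1 ltnSn !andbT.
have yz : (Some i, u) != (Some j, u) :> V by apply: contra ij => /eqP [->].
apply/negP => /(common_cycle4_apex yz) [w /and3P[wx iw jw]].
have layer_of k : A (Some k, u) w || A w (Some k, u) -> w.1 = Some k.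
  rewrite (tadj_sym w) orbb => /tadj_from_top [// | wu].
  by rewrite wu eqxx in wx.
have := layer_of _ jw; rewrite (layer_of _ iw) => -[ji].
by rewrite ji eqxx in ij.
Qed.

Lemma box_adj_grid_point i j : box_adj a1 a2 b1 b2 c1 c2 i j ->
  exists u, in_box i u && in_box j u.
Proof.
have nat_le x p q : Rle (INR p) x -> Rle x (INR q) -> p <= q.
  by move=> px xq; apply/leP/INR_le/(Rle_trans _ _ _ px xq).
rewrite /box_adj; case: excluded_middle_informative => // -[x [y [z]]].
move=> [[ai1 ai2] [[aj1 aj2] [[bi1 bi2] [[bj1 bj2] [[ci1 ci2] [cj1 cj2]]]]]].
move: (nat_le _ _ _ ai1 aj2) (nat_le _ _ _ aj1 ai2) (nat_le _ _ _ bi1 bj2).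
move: (nat_le _ _ _ bj1 bi2) (nat_le _ _ _ ci1 cj2) (nat_le _ _ _ cj1 ci2).
move: (ha i) (hb i) (hc i) (ha j) (hb j) (hc j).
exists (inord (maxn (a1 i) (a1 j)), inord (maxn (b1 i) (b1 j)),
        inord (maxn (c1 i) (c1 j))).
rewrite /in_box /= !inordK; lia.
Qed.

End BoxGraph.

Theorem lemma5 (k1 k2 k3 m : nat) (a1 a2 b1 b2 c1 c2 : 'I_m -> nat) :
  0 < k1 -> 0 < k2 -> 0 < k3 ->
  (forall i, a1 i < a2 i <= k1) ->
  (forall i, b1 i < b2 i <= k2) ->
  (forall i, c1 i < c2 i <= k3) ->
  let adjT := tadj (k1 := k1) (k2 := k2) (k3 := k3) a1 a2 b1 b2 c1 c2 in
  let alpha := talpha k1 k2 k3 m in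
  chi (theta_classes adjT) (contact_adj adjT)
    >= chi (theta_classes adjT) (pcontact_adj adjT alpha)
  /\ chi (theta_classes adjT) (pcontact_adj adjT alpha)
    >= chi [set: 'I_m] (box_adj a1 a2 b1 b2 c1 c2).
Proof.
move=> _ _ _ ha hb hc adjT alpha; split.
  by apply: chi_hom (fun C => C) _ _ => // C1 C2 _ _ -> /pcontact_adj_sub.
apply: (chi_hom (phi := box_class k1 k2 k3 a1 a2 b1 b2 c1 c2)) => [i _ | i j _ _ ij].
  exact: box_class_theta.
case/(box_adj_grid_point ha hb hc) => u /andP[iu ju].
apply/andP; split.
  apply: contraNneq (box_edge_notin_class ha hb hc ij iu ju) => ->.
  exact: box_edge_in_class.
by rewrite /pcontact_adj (box_classes_osculate ha hb hc ij iu ju) orbT.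
Qed.
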